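(* For all constants $\beta < \frac{1}{16}$, $L > 16\beta$ and $C_1 > 1$ there exists a constant $C_2 > 1$ such that the following holds. Let $\delta\in(0,1)$, suppose $n > C_2\log\frac{1}{\delta}$, and let $T = \sigma\sqrt{\frac{n}{2\log\frac{2}{\delta}}}$. Let $x_1,\dots,x_n$ be i.i.d. real samples from a distribution with mean $\mu$ and variance at most $\sigma^2$, and let $\mu_0\in\mathbb{R}$ be a given estimate with $|\mu_0 - \mu|\le C_1\sigma\sqrt{\frac{\log\frac{1}{\delta}}{n}}$. Consider the test that computes \[ B = \frac{1}{n}\sum_{i=1}^n (x_i - \mu_0)^2\mathbb{1}_{|x_i - \mu_0| \le 2\beta T} \] and returns ``INLIER-LIGHT'' if $B \le (1-2L)\sigma^2$ and ``OUTLIER-LIGHT'' otherwise. Then with probability at least $1-\delta$: if the distribution is $(4\beta, 4L)$-inlier-light, the test returns ``INLIER-LIGHT''.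
   Context: For a real-valued distribution $x$ with mean $\mu$ and variance at most $\sigma^2$, and with $T = \sigma\sqrt{\frac{n}{2\log\frac{2}{\delta}}}$: $x$ is $(\beta, L)$-inlier-light if $\mathbb{E}[(x-\mu)^2\mathbb{1}_{|x-\mu|\le\beta T}] < (1-L)\sigma^2$. *)

From HB Require Import structures.
From mathcomp Require Import all_boot all_order all_algebra.
From mathcomp Require Import all_classical all_reals all_analysis.
Set Implicit Arguments. Unset Strict Implicit. Unset Printing Implicit Defensive.
Import Order.TTheory GRing.Theory Num.Theory.
Local Open Scope classical_set_scope.
Local Open Scope ring_scope.

Definition thrT (R : realType) (sigma : R) (n : nat) (delta : R) : R :=
  sigma * Num.sqrt (n%:R / (2 * ln (2 / delta))).

Definition has_mean (R : realType) (D : probability R R) (mu : R) : Prop :=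
  D.-integrable setT (fun x : R => x%:E) /\ (\int[D]_x x%:E = mu%:E)%E.

Definition var_le (R : realType) (D : probability R R) (mu sigma : R) : Prop :=
  (\int[D]_x ((x - mu) ^+ 2)%:E <= (sigma ^+ 2)%:E)%E.

Definition inlier_light (R : realType) (D : probability R R) (mu sigma : R)
    (n : nat) (delta beta L : R) : Prop :=
  (\int[D]_x (if `|x - mu| <= beta * thrT sigma n delta
              then (x - mu) ^+ 2 else 0)%:E
   < ((1 - L) * sigma ^+ 2)%:E)%E.

Definition mutually_independent d (Omega : measurableType d) (R : realType)
    (P : probability Omega R) (n : nat) (X : 'I_n -> {RV P >-> R}) : Prop :=
  forall A : 'I_n -> set R, (forall i, measurable (A i)) ->
    P (\bigcap_(i in [set: 'I_n]) (X i @^-1` A i)) =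
    (\prod_(i < n) P (X i @^-1` A i))%E.

Definition identically_distributed d (Omega : measurableType d) (R : realType)
    (P : probability Omega R) (n : nat) (X : 'I_n -> {RV P >-> R})
    (D : probability R R) : Prop :=
  forall i (A : set R), measurable A -> distribution P (X i) A = D A.

Definition test_B (R : realType) (n : nat) (x : 'I_n -> R)
    (mu0 sigma delta beta : R) : R :=
  n%:R^-1 * \sum_(i < n)
    (if `|x i - mu0| <= 2 * beta * thrT sigma n delta
     then (x i - mu0) ^+ 2 else 0).

From HB Require Import structures.
From mathcomp Require Import all_boot all_order all_algebra.
From mathcomp Require Import all_classical all_reals all_analysis.
From mathcomp Require Import measurable_realfun ring lra.
Set Implicit Arguments.
Unset Strict Implicit.
Unset Printing Implicit Defensive.
Import Order.TTheory GRing.Theory Num.Theory.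
Local Open Scope classical_set_scope.
Local Open Scope ring_scope.

(* Put y(x) = (x - mu0)^2 1_{|x - mu0| <= 2 beta T}, so that the
   test accepts iff sum_i y(x_i) <= n (1 - 2L) sigma^2.  Because mu0 is within
   2 beta T of mu, y(x) is at most the inlier part of (x - mu)^2 at radius
   4 beta T plus (L/4) (x - mu)^2 plus (1 + 4/L) (mu0 - mu)^2; the choice of C2
   makes the last term at most (L/4) sigma^2, hence E y <= (1 - 7L/2) sigma^2.
   As 0 <= y <= (2 beta T)^2, the exponential moment with
   lam = L / (4 (2 beta T)^2) is at most 1 + lam E y / (1 - L/4), and the
   Chernoff bound gives a rejection probability of at most
   exp (- 3 L^2 ln (2/delta) / (32 beta^2)) <= delta / 2, because 16 beta < L. *)

Section finite_valued.
Variables (R : realType) (d : measure_display) (T : measurableType d)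
  (mu : {measure set T -> \bar R}).
Variables (V : finType) (g : T -> V).
Hypothesis mg : forall k, measurable (g @^-1` [set k]).

Lemma fin_valuedE (w : V -> R) x :
  w (g x) = \sum_k w k * \1_(g @^-1` [set k]) x.
Proof.
rewrite (bigD1 (g x)) //= big1 => [|k kgx].
  by rewrite indicE mem_set // mulr1 addr0.
by rewrite indicE memNset ?mulr0 // => gxk; rewrite gxk eqxx in kgx.
Qed.

Lemma measurable_fin_valued (w : V -> R) : measurable_fun setT (w \o g).
Proof.
rewrite [w \o g](funext (fin_valuedE w)); apply: measurable_sum => k.
by apply: measurable_funM => //; exact/measurable_indic.
Qed.

Lemma integral_fin_valued (w : V -> R) : (forall k, 0 <= w k) ->
  (\int[mu]_x (w (g x))%:E = \sum_k (w k)%:E * mu (g @^-1` [set k]))%E.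
Proof.
move=> w0; under eq_integral do rewrite fin_valuedE -sumEFin.
rewrite ge0_integral_sum //; last 2 first.
- by move=> k; apply/measurable_EFinP/measurable_funM => //; exact/measurable_indic.
- by move=> k x _; rewrite lee_fin mulr_ge0 // indicE.
apply: eq_bigr => k _; under eq_integral do rewrite EFinM.
rewrite ge0_integralZl_EFin ?integral_indic ?setIT //.
exact/measurable_EFinP/measurable_indic.
Qed.

End finite_valued.

Section iid_sample.
Variables (R : realType) (d : measure_display) (Omega : measurableType d)
  (P : probability Omega R) (D : probability R R) (n : nat) (X : 'I_n -> {RV P >-> R}).
Hypotheses (X_indep : mutually_independent X) (X_id : identically_distributed X D).

Section finite_valued_sample.
Variables (V : finType) (g : R -> V).
Hypothesis mg : forall k, measurable (g @^-1` [set k]).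

Let G (w : Omega) : {ffun 'I_n -> V} := [ffun i => g (X i w)].

Let fiber_GE (f : {ffun 'I_n -> V}) :
  G @^-1` [set f] = \bigcap_(i in [set: 'I_n]) (X i @^-1` (g @^-1` [set f i])).
Proof.
apply/seteqP; split => w /=.
- by move=> <- i _ /=; rewrite ffunE.
- by move=> Gw; apply/ffunP => i; rewrite ffunE; exact: Gw i I.
Qed.

Let measurable_fiber_G f : measurable (G @^-1` [set f]).
Proof.
rewrite fiber_GE; apply: fin_bigcap_measurable => [|i _]; first exact: finite_finset.
exact: measurable_funPTI.
Qed.

Let p k := fine (D (g @^-1` [set k])).

Let probability_fiber_G f : P (G @^-1` [set f]) = (\prod_i p (f i))%:E.
Proof.
rewrite fiber_GE X_indep // -prodEFin; apply: eq_bigr => i _.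
by rewrite /p fineK ?fin_num_measure //; exact: X_id.
Qed.

Lemma integral_prod_iid_fin_valued (c : V -> R) : (forall k, 0 <= c k) ->
  (\int[P]_w (\prod_i c (g (X i w)))%:E = ((\sum_k c k * p k) ^+ n)%:E)%E.
Proof.
move=> c0.
have -> : (fun w => (\prod_i c (g (X i w)))%:E) =
    (fun w => (\prod_i c (G w i))%:E).
  by apply/funext => w; under [in RHS]eq_bigr do rewrite ffunE.
rewrite (integral_fin_valued P measurable_fiber_G (w := fun f => \prod_i c (f i)));
  last by move=> f; exact: prodr_ge0.
rewrite (eq_bigr (fun f : {ffun 'I_n -> V} => (\prod_i (c (f i) * p (f i)))%:E));
  last first.
  by move=> f _; rewrite big_split EFinM; congr (_ * _)%E; exact: probability_fiber_G.
rewrite sumEFin; congr (_%:E).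
rewrite -(bigA_distr_bigA (fun (i : 'I_n) k => c k * p k)) /=.
by rewrite prodr_const card_ord.
Qed.

End finite_valued_sample.

Lemma measurable_sum_gt (y : R -> R) (t : R) : measurable_fun setT y ->
  measurable [set w | (t < \sum_(i < n) y (X i w))%R].
Proof.
move=> my; have mF : measurable_fun setT (fun w => \sum_(i < n) y (X i w)).
  by apply: measurable_sum => i; exact: measurableT_comp my (measurable_funP (X i)).
rewrite (_ : [set w | _] = (fun w => \sum_(i < n) y (X i w)) @^-1` `]t, +oo[).
  by rewrite -[_ @^-1` _]setTI; exact: mF.
by apply/seteqP; split => w /=; rewrite in_itv /= andbT.
Qed.

Section chernoff.
Variables (y : R -> R) (b h : R).
Hypotheses (my : measurable_fun setT y) (y_ge0 : forall x, 0 <= y x)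
  (y_le : forall x, y x <= b) (h_gt0 : 0 < h).

Let bin x : 'I_(Num.truncn (b / h)).+1 := inord (Num.truncn (y x / h)).

Let bin_itv x (k : nat) : (bin x : nat) = k <-> (k%:R * h <= y x < k.+1%:R * h).
Proof.
have yh0 : 0 <= y x / h by rewrite divr_ge0 // ltW.
rewrite /bin inordK; last first.
  rewrite ltnS truncn_le_nat; apply: le_lt_trans (truncnS_gt _).
  by rewrite ler_pM2r ?invr_gt0.
rewrite -!ler_pdivlMr // -ltr_pdivrMr //; split => [<-|]; first exact: truncn_itv.
exact: truncn_def.
Qed.

Let bin_bounds x : (bin x)%:R * h <= y x < (bin x).+1%:R * h.
Proof. exact/bin_itv. Qed.

Let measurable_bin_fiber k : measurable (bin @^-1` [set k]).
Proof.
have -> : bin @^-1` [set k] = y @^-1` `[k%:R * h, k.+1%:R * h[.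
  apply/seteqP; split => x /=; rewrite in_itv /=.
  - by move=> <-; exact: bin_bounds.
  - by move/bin_itv => binx; apply: val_inj.
by rewrite -[_ @^-1` _]setTI; exact: my.
Qed.

Let weight (lam : R) (k : 'I_(Num.truncn (b / h)).+1) := expR (lam * (k%:R * h)).

Let mean_weight_le lam S : 0 <= lam ->
  (\int[D]_x (expR (lam * y x))%:E <= S%:E)%E ->
  \sum_k weight lam k * fine (D (bin @^-1` [set k])) <= S.
Proof.
move=> lam0 mgfS; rewrite -lee_fin; apply: le_trans mgfS.
rewrite -sumEFin; under eq_bigr do rewrite EFinM fineK ?fin_num_measure //.
rewrite -(integral_fin_valued D measurable_bin_fiber (w := weight lam)) => [|k];
  last exact: expR_ge0.
apply: ge0_le_integral => //.
- by move=> *; rewrite lee_fin expR_ge0.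
- by apply/measurable_EFinP; exact: measurable_fin_valued measurable_bin_fiber _.
- by apply/measurable_EFinP/measurableT_comp => //; exact: measurable_funM.
- move=> x _; rewrite lee_fin ler_expR ler_wpM2l //.
  by case/andP: (bin_bounds x).
Qed.

Let indic_sum_gt_le lam t w : 0 <= lam ->
  \1_[set w | (t < \sum_(i < n) y (X i w))%R] w <=
    expR (- (lam * (t - n%:R * h))) * \prod_i weight lam (bin (X i w)).
Proof.
move=> lam0; rewrite indicE; case: (boolP (w \in _)) => [/set_mem /= sum_gt|_]; last first.
  by rewrite mulr_ge0 ?expR_ge0 //; apply: prodr_ge0 => i _; exact: expR_ge0.
rewrite /weight -expR_sum -expRD -[X in X <= _]expR0 ler_expR addrC subr_ge0.
rewrite -mulr_sumr ler_wpM2l // lerBlDr; apply/ltW/(lt_le_trans sum_gt).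
rewrite mulr_natl -[n in h *+ n]card_ord -sumr_const -big_split /=.
apply: ler_sum => i _; rewrite -[X in _ + X]mul1r -mulrDl natr1.
by case/andP: (bin_bounds (X i w)) => _ /ltW.
Qed.

(* Independence is only available for events, so the exponential moment of the
   sum is computed for [y] rounded down to a multiple of [h], at the price of
   the factor [expR (lam * n * h)]. *)
Lemma chernoff_bounded_iid (lam S t : R) : 0 <= lam ->
  (\int[D]_x (expR (lam * y x))%:E <= S%:E)%E ->
  (P [set w | (t < \sum_(i < n) y (X i w))%R] <=
     (expR (- (lam * (t - n%:R * h))) * S ^+ n)%:E)%E.
Proof.
move=> lam0 mgfS; set E := expR _.
have mprod : measurable_fun setT (fun w => \prod_i weight lam (bin (X i w))).
  apply: measurable_prod => i _.
  exact: measurableT_comp (measurable_fin_valued measurable_bin_fiber (weight lam))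
    (measurable_funP (X i)).
rewrite -[X in P X]setIT -integral_indic //; last exact: measurable_sum_gt.
apply: (@le_trans _ _ (\int[P]_w (E * \prod_i weight lam (bin (X i w)))%:E)%E).
  apply: ge0_le_integral => //.
  - exact/measurable_EFinP/measurable_indic/measurable_sum_gt.
  - exact/measurable_EFinP/measurable_funM.
  - by move=> w _; rewrite lee_fin indic_sum_gt_le.
under eq_integral do rewrite EFinM.
rewrite ge0_integralZl_EFin ?expR_ge0 //; last 2 first.
- by move=> w _; rewrite lee_fin; apply: prodr_ge0 => i _; exact: expR_ge0.
- exact/measurable_EFinP.
rewrite (integral_prod_iid_fin_valued measurable_bin_fiber (c := weight lam)) => [|k];
  last exact: expR_ge0.
have mean_ge0 : 0 <= \sum_k weight lam k * fine (D (bin @^-1` [set k])).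
  by apply: sumr_ge0 => k _; rewrite mulr_ge0 ?expR_ge0 ?fine_ge0 ?measure_ge0.
have mean_le := mean_weight_le lam0 mgfS.
rewrite -EFinM lee_fin ler_wpM2l ?expR_ge0 // lerXn2r ?nnegrE //.
exact: le_trans mean_le.
Qed.

End chernoff.

End iid_sample.

(* [test_B] and [inlier_light] have this function inlined, so they unfold to it
   by conversion. *)
Definition trunc_sq (R : realType) (m a x : R) : R :=
  if `|x - m| <= a then (x - m) ^+ 2 else 0.

Section trunc_sq.
Variable R : realType.
Implicit Types m a x eps : R.

Lemma trunc_sq_ge0 m a x : 0 <= trunc_sq m a x.
Proof. by rewrite /trunc_sq; case: ifP => // _; exact: sqr_ge0. Qed.

Lemma trunc_sq_le m a x : trunc_sq m a x <= a ^+ 2.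
Proof.
rewrite /trunc_sq; case: ifPn => [xa|_]; last exact: sqr_ge0.
by rewrite -real_normK ?num_real // lerXn2r ?nnegrE // (le_trans _ xa).
Qed.

Lemma measurable_trunc_sq m a : measurable_fun setT (trunc_sq m a).
Proof.
have mB : measurable_fun setT (fun x : R => x - m) by exact: measurable_funB.
apply: measurable_fun_ifT; last exact: measurable_cst.
- apply: measurable_fun_ler => //; exact: measurableT_comp (@normr_measurable R setT) mB.
- exact: measurable_funX.
Qed.

Lemma trunc_sq_shift_le m m0 a eps x : 0 < eps -> `|m0 - m| <= a ->
  trunc_sq m0 a x <=
    trunc_sq m (2 * a) x + eps * (x - m) ^+ 2 + (1 + eps^-1) * (m0 - m) ^+ 2.
Proof.
move=> eps0 shift; have eps_ge0 := ltW eps0.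
have rest_ge0 : 0 <= eps * (x - m) ^+ 2 + (1 + eps^-1) * (m0 - m) ^+ 2.
  by rewrite addr_ge0 // mulr_ge0 ?sqr_ge0 ?addr_ge0 ?invr_ge0.
rewrite -addrA {1}/trunc_sq; case: ifPn => [near|_]; last by rewrite addr_ge0 ?trunc_sq_ge0.
have near2 : `|x - m| <= 2 * a.
  rewrite (_ : x - m = (x - m0) + (m0 - m)); last by ring.
  by rewrite mulr2n mulrDl mul1r (le_trans (ler_normD _ _)) // lerD.
rewrite /trunc_sq near2 (_ : x - m0 = (x - m) - (m0 - m)); last by ring.
have : 0 <= eps * ((x - m) + eps^-1 * (m0 - m)) ^+ 2 by rewrite mulr_ge0 ?sqr_ge0.
set u := x - m; set v := m0 - m.
have -> : eps * (u + eps^-1 * v) ^+ 2 = eps * u ^+ 2 + 2 * u * v + eps^-1 * v ^+ 2.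
  by field; rewrite gt_eqF.
nra.
Qed.

End trunc_sq.

Lemma expR_le_linear (R : realType) (u c : R) :
  0 <= u -> u <= c -> c < 1 -> expR u <= 1 + u / (1 - c).
Proof.
move=> u0 uc c1.
have u1 : 0 < 1 - u by lra.
have expRNu : 1 - u <= expR (- u) by exact: expR_ge1Dx.
rewrite -[u in expR u]opprK expRN.
apply: (@le_trans _ _ (1 - u)^-1); first by rewrite lef_pV2 ?posrE ?expR_gt0.
have -> : (1 - u)^-1 = 1 + u / (1 - u) by field; rewrite gt_eqF.
by rewrite lerD2l ler_wpM2l // lef_pV2 ?posrE; lra.
Qed.

Section integral_bounds.
Variables (R : realType) (D : probability R R).

Lemma integral_trunc_sq_shift_le m m0 a eps A V : 0 < eps -> `|m0 - m| <= a ->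
  (\int[D]_x (trunc_sq m (2 * a) x)%:E <= A%:E)%E ->
  (\int[D]_x ((x - m) ^+ 2)%:E <= V%:E)%E ->
  (\int[D]_x (trunc_sq m0 a x)%:E <=
     (A + eps * V + (1 + eps^-1) * (m0 - m) ^+ 2)%:E)%E.
Proof.
move=> eps0 shift intA intV; have eps_ge0 := ltW eps0.
set K := (1 + eps^-1) * (m0 - m) ^+ 2.
have K0 : 0 <= K by rewrite mulr_ge0 ?sqr_ge0 ?addr_ge0 ?invr_ge0.
have msq : measurable_fun setT (fun x : R => (x - m) ^+ 2).
  by apply: measurable_funX; exact: measurable_funB.
apply: (@le_trans _ _
    (\int[D]_x (trunc_sq m (2 * a) x + (eps * (x - m) ^+ 2 + K))%:E)%E).
  apply: ge0_le_integral => //.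
  - by move=> x _; rewrite lee_fin trunc_sq_ge0.
  - by apply/measurable_EFinP; exact: measurable_trunc_sq.
  - apply/measurable_EFinP/measurable_funD; first exact: measurable_trunc_sq.
    by apply: measurable_funD => //; exact: measurable_funM.
  - by move=> x _; rewrite lee_fin addrA trunc_sq_shift_le.
have msq_ge0 x : 0 <= eps * (x - m) ^+ 2 by rewrite mulr_ge0 ?sqr_ge0.
under eq_integral do rewrite EFinD.
rewrite ge0_integralD //; first last.
- by apply/measurable_EFinP/measurable_funD => //; exact: measurable_funM.
- by move=> x _; rewrite lee_fin addr_ge0.
- by apply/measurable_EFinP; exact: measurable_trunc_sq.
- by move=> x _; rewrite lee_fin trunc_sq_ge0.
under [X in (_ + X)%E]eq_integral do rewrite EFinD.
rewrite ge0_integralD //; last 2 first.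
- by move=> x _; rewrite lee_fin.
- by apply/measurable_EFinP; exact: measurable_funM.
under [X in (_ + (X + _))%E]eq_integral do rewrite EFinM.
rewrite ge0_integralZl_EFin //; last 2 first.
- by move=> x _; rewrite lee_fin sqr_ge0.
- exact/measurable_EFinP.
rewrite integral_cst // [X in (K%:E * X)%E](_ : _ = 1%E) ?mule1;
  last exact: probability_setT.
rewrite !EFinD addeA; apply: leeD => //; apply: leeD => //.
by rewrite EFinM; apply: lee_wpmul2l; rewrite ?lee_fin.
Qed.

Lemma integral_expR_le_linear (y : R -> R) (lam c M : R) :
  measurable_fun setT y -> (forall x, 0 <= y x) -> (forall x, lam * y x <= c) ->
  0 <= lam -> c < 1 -> (\int[D]_x (y x)%:E <= M%:E)%E ->
  (\int[D]_x (expR (lam * y x))%:E <= (1 + lam / (1 - c) * M)%:E)%E.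
Proof.
move=> my y_ge0 y_le lam0 c1 intM.
have k0 : 0 <= lam / (1 - c) by rewrite divr_ge0 // subr_ge0 ltW.
have ky_ge0 x : 0 <= lam / (1 - c) * y x by rewrite mulr_ge0.
apply: (@le_trans _ _ (\int[D]_x (1 + lam / (1 - c) * y x)%:E)%E).
  apply: ge0_le_integral => //.
  - by apply/measurable_EFinP/measurableT_comp => //; exact: measurable_funM.
  - by apply/measurable_EFinP/measurable_funD => //; exact: measurable_funM.
  - move=> x _; rewrite lee_fin mulrAC expR_le_linear ?mulr_ge0 //.
under eq_integral do rewrite EFinD.
rewrite ge0_integralD //; last 2 first.
- by move=> x _; rewrite lee_fin.
- by apply/measurable_EFinP; exact: measurable_funM.
under [X in (_ + X)%E]eq_integral do rewrite EFinM.
rewrite ge0_integralZl_EFin //; last 2 first.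
- by move=> x _; rewrite lee_fin.
- exact/measurable_EFinP.
rewrite integral_cst // [X in (1 * X)%E](_ : _ = 1%E) ?mule1; last exact: probability_setT.
rewrite EFinD [X in (_ <= _ + X)%E]EFinM; apply: leeD => //.
by apply: lee_wpmul2l; rewrite ?lee_fin.
Qed.

End integral_bounds.

Lemma chernoff_exponent_le (R : realType) (beta L s n l b lam M : R) :
  0 < beta -> 16 * beta < L -> L < 1 / 4 -> 0 < s -> 0 < n -> 0 < l ->
  b = 2 * beta ^+ 2 * s * n / l -> lam * b = L / 4 ->
  M <= (1 - 4 * L + L / 2) * s ->
  - (lam * (n * ((1 - 2 * L) * s) - n * (L * s / 4))) + n * (lam / (1 - L / 4) * M)
    <= - l.
Proof.
move=> beta0 betaL L4 s0 n0 l0 bE lamb ML.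
have L0 : 0 < L by lra.
have beta2 : 0 < 8 * beta ^+ 2 by rewrite mulr_gt0 ?exprn_gt0.
have b0 : 0 < b by rewrite bE divr_gt0 // !mulr_gt0 // exprn_gt0.
have lam0 : 0 < lam.
  by rewrite -[lam](mulfK (lt0r_neq0 b0)) lamb divr_gt0 //; lra.
have lam_ns : lam * (n * s) * (8 * beta ^+ 2) = L * l.
  have -> : lam * (n * s) * (8 * beta ^+ 2) = lam * b * (4 * l).
    by rewrite bE; field; rewrite gt_eqF.
  by rewrite lamb; field.
have drift_le : n * (lam / (1 - L / 4) * M) <= lam * (n * s) * (1 - 3 * L).
  have -> : n * (lam / (1 - L / 4) * M) = lam * n * (M / (1 - L / 4)).
    by field; apply/eqP; lra.
  have -> : lam * (n * s) * (1 - 3 * L) = lam * n * ((1 - 3 * L) * s) by ring.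
  by apply: ler_wpM2l; [rewrite mulr_ge0 // ltW | rewrite ler_pdivrMr; nra].
have gain : 4 * l <= 3 * L * (lam * (n * s)).
  have L2 : 32 * beta ^+ 2 <= 3 * L ^+ 2 by nra.
  rewrite -(ler_pM2r beta2) -[X in _ <= X]mulrA lam_ns; nra.
nra.
Qed.

Lemma thrT_ge0 (R : realType) (sigma : R) n delta : 0 <= sigma -> 0 <= thrT sigma n delta.
Proof. by move=> sigma0; rewrite /thrT mulr_ge0 ?sqrtr_ge0. Qed.

Lemma sqr_thrT (R : realType) (sigma : R) n delta : 0 <= ln (2 / delta) ->
  thrT sigma n delta ^+ 2 = sigma ^+ 2 * (n%:R / (2 * ln (2 / delta))).
Proof. by move=> l0; rewrite /thrT exprMn sqr_sqrtr // divr_ge0 // mulr_ge0. Qed.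

Lemma inlier_light_lt1 (R : realType) (D : probability R R) (mu sigma : R) n
    (delta beta L : R) :
  inlier_light D mu sigma n delta beta L -> L < 1.
Proof.
rewrite /inlier_light ltNge => /negP; apply: contra_notT.
rewrite -leNgt => L1; apply: (@le_trans _ _ 0%E).
  by rewrite lee_fin mulr_le0_ge0 ?sqr_ge0 // subr_le0.
by apply: integral_ge0 => x _; rewrite lee_fin -/(trunc_sq _ _ _) trunc_sq_ge0.
Qed.

Lemma test_B_nonpos_beta (R : realType) n (x : 'I_n -> R) (mu0 sigma delta beta : R) :
  0 <= sigma -> beta <= 0 -> test_B x mu0 sigma delta beta = 0.
Proof.
move=> sigma0 beta0; rewrite /test_B big1 ?mulr0 // => i _.
case: ifPn => // near; suff -> : x i = mu0 by rewrite subrr expr0n.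
apply/eqP; rewrite -subr_eq0 -normr_le0 (le_trans near) //.
by rewrite -mulrA mulr_ge0_le0 // mulr_le0_ge0 // thrT_ge0.
Qed.

Lemma test_B_accepts_surely (R : realType) (beta L : R) (d : measure_display)
    (Omega : measurableType d) (P : probability Omega R) (D : probability R R) (n : nat)
    (X : 'I_n -> {RV P >-> R}) (delta sigma mu mu0 : R) :
  beta <= 0 -> 0 < sigma -> inlier_light D mu sigma n delta (4 * beta) (4 * L) ->
  P [set w | test_B (fun i => X i w) mu0 sigma delta beta
    <= (1 - 2 * L) * sigma ^+ 2] = 1%E.
Proof.
move=> beta0 sigma0 /inlier_light_lt1 L_lt.
rewrite (_ : [set w | _] = setT) ?probability_setT //.
apply/seteqP; split=> // w _ /=; rewrite test_B_nonpos_beta ?(ltW sigma0) //.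
by rewrite mulr_ge0 ?sqr_ge0 //; lra.
Qed.

Section inlier_light_test.
Variables (R : realType) (beta L : R) (d : measure_display) (Omega : measurableType d)
  (P : probability Omega R) (D : probability R R) (n : nat) (X : 'I_n -> {RV P >-> R})
  (delta sigma mu mu0 : R).
Hypotheses (beta_gt0 : 0 < beta) (betaL : 16 * beta < L) (L_lt : L < 1 / 4)
  (delta01 : 0 < delta < 1) (sigma_gt0 : 0 < sigma) (n_gt0 : (0 < n)%N)
  (ln_le : ln (2 / delta) <= 2 * n%:R) (var_D : var_le D mu sigma)
  (X_indep : mutually_independent X) (X_id : identically_distributed X D)
  (shift_beta : (mu0 - mu) ^+ 2 <= beta ^+ 2 * sigma ^+ 2)
  (shift_L : (1 + 4 / L) * (mu0 - mu) ^+ 2 <= L / 4 * sigma ^+ 2)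
  (inlier : inlier_light D mu sigma n delta (4 * beta) (4 * L)).

Let l := ln (2 / delta).
Let a := 2 * beta * thrT sigma n delta.

Let l_gt0 : 0 < l.
Proof. by apply: ln_gt0; case/andP: delta01 => ? ?; rewrite ltr_pdivlMr // mul1r; lra. Qed.

Let n_pos : 0 < n%:R :> R. Proof. by rewrite ltr0n. Qed.

Let L_gt0 : 0 < L. Proof. by move: (beta_gt0) (betaL); lra. Qed.

Let sqr_a : a ^+ 2 = 2 * beta ^+ 2 * sigma ^+ 2 * n%:R / l.
Proof. by rewrite /a /l exprMn sqr_thrT ?ltW // exprMn; field; rewrite gt_eqF. Qed.

Let shift_le : `|mu0 - mu| <= a.
Proof.
have a_ge0 : 0 <= a by rewrite /a !mulr_ge0 ?thrT_ge0 // ltW.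
rewrite -(@ler_pXn2r _ 2) ?nnegrE // real_normK ?num_real // sqr_a (le_trans shift_beta) //.
have := ler_wpM2l (mulr_ge0 (sqr_ge0 beta) (sqr_ge0 sigma)) ln_le.
by rewrite /l ler_pdivlMr //; lra.
Qed.

Let mean_le : (\int[D]_x (trunc_sq mu0 a x)%:E <= ((1 - 4 * L + L / 2) * sigma ^+ 2)%:E)%E.
Proof.
have L4_gt0 : 0 < L / 4 by rewrite divr_gt0.
apply: le_trans (integral_trunc_sq_shift_le L4_gt0 shift_le _ var_D) _.
  rewrite (_ : 2 * a = 4 * beta * thrT sigma n delta); first exact: ltW inlier.
  by rewrite /a; ring.
by rewrite lee_fin invf_div; move: shift_L; lra.
Qed.

Let reject_le : (P [set w | (n%:R * ((1 - 2 * L) * sigma ^+ 2) <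
    \sum_(i < n) trunc_sq mu0 a (X i w))%R] <= delta%:E)%E.
Proof.
set s := sigma ^+ 2; set M := (1 - 4 * L + L / 2) * s.
have s_gt0 : 0 < s by rewrite exprn_gt0.
have b_gt0 : 0 < a ^+ 2 by rewrite sqr_a divr_gt0 // !mulr_gt0 // exprn_gt0.
set lam := L / 4 / a ^+ 2.
have lamb : lam * a ^+ 2 = L / 4 by rewrite /lam divfK ?gt_eqF.
have lam_ge0 : 0 <= lam by rewrite divr_ge0 ?ltW ?divr_gt0.
have lamb_lt1 : lam * a ^+ 2 < 1 by rewrite lamb; move: (L_lt); lra.
have mgf := integral_expR_le_linear (measurable_trunc_sq mu0 a) (trunc_sq_ge0 mu0 a)
  (fun x => ler_wpM2l lam_ge0 (trunc_sq_le mu0 a x)) lam_ge0 lamb_lt1 mean_le.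
rewrite lamb in mgf.
have h_gt0 : 0 < L * s / 4 by rewrite divr_gt0 // mulr_gt0.
apply: le_trans (chernoff_bounded_iid X_indep X_id (measurable_trunc_sq mu0 a)
  (trunc_sq_ge0 mu0 a) (trunc_sq_le mu0 a) h_gt0 _ lam_ge0 mgf) _.
rewrite lee_fin -/M.
have M_ge0 : 0 <= M by rewrite /M mulr_ge0 ?ltW //; move: (L_lt); lra.
have S_le : (1 + lam / (1 - L / 4) * M) ^+ n <= expR (n%:R * (lam / (1 - L / 4) * M)).
  rewrite expRM_natl lerXn2r ?nnegrE ?expR_ge0 ?expR_ge1Dx //.
  have k_ge0 : 0 <= lam / (1 - L / 4) by rewrite divr_ge0 //; move: (L_lt); lra.
  by rewrite addr_ge0 // mulr_ge0.
apply: le_trans (ler_wpM2l (expR_ge0 _) S_le) _; rewrite -expRD.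
apply: (@le_trans _ _ (expR (- l))).
  by rewrite ler_expR; apply: (chernoff_exponent_le _ _ _ _ _ l_gt0 sqr_a lamb).
have [delta_gt0 _] := andP delta01.
by rewrite /l expRN lnK ?posrE ?divr_gt0 // invf_div ler_pdivrMr //; lra.
Qed.

Lemma test_B_accepts : (P [set w | test_B (fun i => X i w) mu0 sigma delta beta
    <= (1 - 2 * L) * sigma ^+ 2]%R >= (1 - delta)%:E)%E.
Proof.
have := reject_le; set reject := [set w | (_ < _)%R].
rewrite (_ : [set w | _] = ~` reject); last first.
  apply/seteqP; split => w /=; rewrite /test_B (ler_pdivrMl _ _ n_pos) leNgt.
  - by move=> /negP accept; exact: accept.
  - by move=> accept; apply/negP; exact: accept.
rewrite probability_setC; last by apply: measurable_sum_gt; exact: measurable_trunc_sq.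
by move=> reject_small; rewrite EFinB; exact: leeB (lexx _) reject_small.
Qed.

End inlier_light_test.

Lemma ln_2div_le (R : realType) (delta : R) (n : nat) :
  0 < delta < 1 -> ln (1 / delta) < n%:R -> ln (2 / delta) <= 2 * n%:R.
Proof.
move=> /andP[delta0 delta1] ln_lt.
have l1_gt0 : 0 < ln (1 / delta) by apply: ln_gt0; rewrite ltr_pdivlMr // mul1r.
have n_ge1 : 1 <= n%:R :> R by rewrite ler1n -(ltr0n R) (lt_trans l1_gt0).
have ln2 : ln (2 : R) <= 1 by apply: (@le_ln1Dx R 1); lra.
rewrite (_ : 2 / delta = 2 * (1 / delta)); last by rewrite mul1r.
by rewrite lnM ?posrE ?divr_gt0 //; lra.
Qed.

Definition sample_size_factor (R : realType) (beta L C1 : R) : R :=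
  1 + C1 ^+ 2 / beta ^+ 2 + 4 * C1 ^+ 2 * (1 + 4 / L) / L.

Lemma sample_size_factor_gt1 (R : realType) (beta L C1 : R) :
  0 < beta -> 0 < L -> 1 < C1 -> 1 < sample_size_factor beta L C1.
Proof.
move=> beta0 L0 C1_gt1.
have : 0 < C1 ^+ 2 / beta ^+ 2 by rewrite divr_gt0 ?exprn_gt0 //; lra.
have : 0 <= 4 * C1 ^+ 2 * (1 + 4 / L) / L.
  have K_ge0 : 0 <= 1 + 4 / L by rewrite addr_ge0 // divr_ge0 // ltW.
  by rewrite divr_ge0 ?(ltW L0) // mulr_ge0 // mulr_ge0 ?sqr_ge0.
rewrite /sample_size_factor; lra.
Qed.

Lemma sqr_shift_small (R : realType) (beta L C1 sigma l1 n dd : R) :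
  0 < beta -> 0 < L -> 0 < l1 -> 0 < n -> sample_size_factor beta L C1 * l1 < n ->
  `|dd| <= C1 * sigma * Num.sqrt (l1 / n) ->
  dd ^+ 2 <= beta ^+ 2 * sigma ^+ 2 /\ (1 + 4 / L) * dd ^+ 2 <= L / 4 * sigma ^+ 2.
Proof.
move=> beta0 L0 l10 n0 C2_lt dd_le.
set r := l1 / n; have r0 : 0 < r by rewrite divr_gt0.
have dd2 : dd ^+ 2 <= C1 ^+ 2 * r * sigma ^+ 2.
  rewrite -real_normK ?num_real // (le_trans (lerXn2r _ _ _ dd_le)) ?nnegrE //.
  - exact: le_trans (normr_ge0 dd) dd_le.
  - by rewrite !exprMn (sqr_sqrtr (ltW r0)) mulrAC.
have C2r : (1 + C1 ^+ 2 / beta ^+ 2 + 4 * C1 ^+ 2 * (1 + 4 / L) / L) * r < 1.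
  by rewrite /r mulrA ltr_pdivrMr // mul1r.
have K0 : 0 <= 1 + 4 / L by rewrite addr_ge0 // divr_ge0 // ltW.
have C1_2 : 0 <= C1 ^+ 2 by exact: sqr_ge0.
have t_beta : 0 <= C1 ^+ 2 / beta ^+ 2 * r.
  by apply: mulr_ge0 (ltW r0); rewrite divr_ge0 ?sqr_ge0.
have t_L : 0 <= 4 * C1 ^+ 2 * (1 + 4 / L) / L * r.
  by apply: mulr_ge0 (ltW r0); apply: divr_ge0 (ltW L0); rewrite mulr_ge0 // mulr_ge0.
have small_beta : C1 ^+ 2 * r <= beta ^+ 2.
  have : C1 ^+ 2 / beta ^+ 2 * r <= 1 by lra.
  by rewrite mulrAC ler_pdivrMr ?exprn_gt0 // mul1r.
have small_L : (1 + 4 / L) * (C1 ^+ 2 * r) <= L / 4.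
  have : 4 * C1 ^+ 2 * (1 + 4 / L) / L * r <= 1 by lra.
  have -> : 4 * C1 ^+ 2 * (1 + 4 / L) / L * r = (1 + 4 / L) * (C1 ^+ 2 * r) / (L / 4).
    by field; rewrite gt_eqF.
  by rewrite ler_pdivrMr ?divr_gt0 // mul1r.
split.
- by apply: le_trans dd2 _; rewrite ler_wpM2r ?sqr_ge0.
- apply: le_trans (ler_wpM2l K0 dd2) _.
  by rewrite mulrA ler_wpM2r ?sqr_ge0.
Qed.

Theorem lemma14 (R : realType) (beta L C1 : R) :
  beta < 1 / 16 -> 16 * beta < L -> 1 < C1 ->
  exists C2 : R, 1 < C2 /\
  forall (d : measure_display) (Omega : measurableType d)
    (P : probability Omega R) (D : probability R R)
    (n : nat) (X : 'I_n -> {RV P >-> R}) (delta sigma mu mu0 : R),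
    0 < delta < 1 ->
    C2 * ln (1 / delta) < n%:R ->
    0 < sigma ->
    has_mean D mu ->
    var_le D mu sigma ->
    mutually_independent X ->
    identically_distributed X D ->
    `|mu0 - mu| <= C1 * sigma * Num.sqrt (ln (1 / delta) / n%:R) ->
    inlier_light D mu sigma n delta (4 * beta) (4 * L) ->
    (P [set w | test_B (fun i => X i w) mu0 sigma delta beta
                <= (1 - 2 * L) * sigma ^+ 2]%R >= (1 - delta)%:E)%E.
Proof.
move=> _ betaL C1_gt1.
have [beta_le0|beta_gt0] := lerP beta 0.
  exists 2; split=> [|d Omega P D n X delta sigma mu mu0 /andP[delta0 _] _ sigma_gt0];
    first lra.
  move=> _ _ _ _ _ inl.
  by rewrite (test_B_accepts_surely _ _ beta_le0 sigma_gt0 inl) lee_fin; lra.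
have L_gt0 : 0 < L by lra.
have C2_gt1 := sample_size_factor_gt1 beta_gt0 L_gt0 C1_gt1.
exists (sample_size_factor beta L C1); split=> //.
move=> d Omega P D n X delta sigma mu mu0 delta01 n_big sigma_gt0 _ var_D X_indep X_id
  shift inl.
have L_lt : L < 1 / 4 by have := inlier_light_lt1 inl; lra.
have l1_gt0 : 0 < ln (1 / delta).
  by case/andP: delta01 => delta0 delta1; apply: ln_gt0; rewrite ltr_pdivlMr // mul1r.
have l1_lt : ln (1 / delta) < n%:R.
  by apply: le_lt_trans n_big; rewrite ler_peMl ?(ltW l1_gt0) ?(ltW C2_gt1).
have n_gt0 : 0 < n%:R :> R by exact: lt_trans l1_lt.
have [shift_beta shift_L] := sqr_shift_small beta_gt0 L_gt0 l1_gt0 n_gt0 n_big shift.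
apply: (test_B_accepts (D := D) (mu := mu)) => //; first by rewrite -(ltr0n R).
exact: ln_2div_le.
Qed.
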